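(* Let $R$ be an integral domain whose unit group contains an element different from $1$, and let $\varphi$ be an automorphism of $\overline{\mathbf{A}_4(R)}=\mathbf{A}_4(R)/\mathbf{U}_4(R)'$. Then there exist a permutation $\sigma$ of the set $\{(1,2),(2,3),(3,4)\}$ and automorphisms $\Phi_{1,2},\Phi_{2,3},\Phi_{3,4}$ of the additive group $(R,+)$ such that $\varphi(\bar e_{i,j}(r))=\bar e_{\sigma(i,j)}(\Phi_{i,j}(r))$ for all $(i,j)\in\{(1,2),(2,3),(3,4)\}$ and all $r\in R$.
   Context: $\mathbf{A}_4(R)$ is the group of upper triangular $4\times4$ matrices over $R$ with diagonal $(1,u_2,u_3,1)$, $u_2,u_3\in U(R)$; $\mathbf{U}_4(R)$ its subgroup of upper unitriangular matrices and $\mathbf{U}_4(R)'$ the commutator subgroup of $\mathbf{U}_4(R)$. For $i<j$ and $r\in R$, $e_{i,j}(r)$ is the unitriangular matrix with $(i,j)$-entry $r$ and all other off-diagonal entries $0$, and $\bar e_{i,j}(r)$ its image in $\overline{\mathbf{A}_4(R)}$; for a pair $(k,l)$ we write $\bar e_{(k,l)}=\bar e_{k,l}$. *)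

From HB Require Import structures.
From mathcomp Require Import all_boot all_order all_algebra all_fingroup.
Set Implicit Arguments. Unset Strict Implicit. Unset Printing Implicit Defensive.
Import GRing.Theory.
Local Open Scope ring_scope.

Section A4.
Variable R : idomainType.

(* Indices are 0-based: matrix entry (i,j) of the paper is entry (i-1,j-1). *)

Definition inA4 (M : 'M[R]_4) : Prop :=
  (forall i j : 'I_4, (j < i)%N -> M i j = 0) /\
  M (inord 0) (inord 0) = 1 /\ M (inord 3) (inord 3) = 1 /\
  M (inord 1) (inord 1) \is a GRing.unit /\ M (inord 2) (inord 2) \is a GRing.unit.

Definition inU4 (M : 'M[R]_4) : Prop :=
  (forall i j : 'I_4, (j < i)%N -> M i j = 0) /\ (forall i : 'I_4, M i i = 1).

Inductive inU4' : 'M[R]_4 -> Prop :=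
  | U4'_one : inU4' 1
  | U4'_comm x y : inU4 x -> inU4 y -> inU4' (x^-1 * y^-1 * x * y)
  | U4'_mul x y : inU4' x -> inU4' y -> inU4' (x * y)
  | U4'_inv x : inU4' x -> inU4' x^-1.

Definition congU (x y : 'M[R]_4) : Prop := inU4' (x^-1 * y).

(* A map on representatives inducing an automorphism of A_4(R)/U_4(R)'. *)
Definition quot_aut (phi : 'M[R]_4 -> 'M[R]_4) : Prop :=
  [/\ (forall x, inA4 x -> inA4 (phi x)),
      (forall x y, inA4 x -> inA4 y -> congU x y -> congU (phi x) (phi y)),
      (forall x y, inA4 x -> inA4 y -> congU (phi (x * y)) (phi x * phi y)),
      (forall x y, inA4 x -> inA4 y -> congU (phi x) (phi y) -> congU x y) &
      (forall y, inA4 y -> exists2 x, inA4 x & congU (phi x) y)].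

Definition elem (i j : 'I_4) (r : R) : 'M[R]_4 := 1%:M + r *: delta_mx i j.

(* k : 'I_3 encodes the pair (k+1,k+2) (1-based), i.e. (1,2),(2,3),(3,4). *)
Definition elem_k (k : 'I_3) (r : R) : 'M[R]_4 := elem (inord k) (inord k.+1) r.

Definition additive_aut (f : R -> R) : Prop :=
  (forall x y, f (x + y) = f x + f y) /\ bijective f.

End A4.

(* Work in coordinates: A_4(R)/U_4(R)' is the group of tuples (u2, u3, x12, x23, x34),
   and an automorphism of it preserves every subset defined in group-theoretic terms.
   Since R is a domain, the image N of U_4(R) (where u2 = u3 = 1) consists exactly of
   the elements commuting with all their conjugates.  Given a unit u <> 1, the elements
   of the three root subgroups X_k = {e_k(r)} are exactly the elements of N commuting
   with some element outside N.  A product of nontrivial elements of two distinct root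
   subgroups lies in no root subgroup, so the automorphism maps each X_k into a single
   X_(sigma k), with sigma injective; the induced maps X_k -> X_(sigma k) are additive,
   injective, and surjective because the inverse automorphism also preserves the X_k. *)

From HB Require Import structures.
From mathcomp Require Import all_boot all_order all_algebra all_fingroup.
From mathcomp Require Import ring.
Set Implicit Arguments. Unset Strict Implicit. Unset Printing Implicit Defensive.
Import GRing.Theory.
Local Open Scope ring_scope.

Lemma inj_surj_bij (T : choiceType) (U : eqType) (f : T -> U) :
  injective f -> (forall y, exists x, f x = y) -> bijective f.
Proof.
move=> finj fsurj; have ex y : exists x, f x == y by have [x <-] := fsurj y; exists x.
by exists (fun y => xchoose (ex y)) => [x | y]; [apply: finj |]; exact/eqP/(xchooseP (ex _)).
Qed.

Section Abar.
Variable R : idomainType.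

(* An element of A_4(R)/U_4(R)' is determined by the diagonal entries u2, u3 and the
   superdiagonal entries of any representative ([congU_coords]); [abar_mul] is the
   matrix product read off on these entries. *)
Record abar := Abar { u2 : R; u3 : R; x12 : R; x23 : R; x34 : R }.

Definition abar_valid p := u2 p \is a GRing.unit /\ u3 p \is a GRing.unit.

Definition abar_mul p q := Abar (u2 p * u2 q) (u3 p * u3 q) (x12 q + x12 p * u2 q)
  (u2 p * x23 q + x23 p * u3 q) (u3 p * x34 q + x34 p).

Definition abar1 := Abar 1 1 0 0 0.

Definition abar_commute p q := abar_mul p q = abar_mul q p.

Lemma abar_valid_mul p q : abar_valid p -> abar_valid q -> abar_valid (abar_mul p q).
Proof. by case=> ? ? [? ?]; split; rewrite /= unitrM; apply/andP. Qed.

Lemma abar_valid1 : abar_valid abar1.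
Proof. by split; exact: unitr1. Qed.

Lemma abar_mulr1 p : abar_mul p abar1 = p.
Proof. by case: p => a b x y z; rewrite /abar_mul /=; congr Abar; ring. Qed.

Lemma abar_idem p : abar_valid p -> abar_mul p p = p -> p = abar1.
Proof.
case: p => a b x y z [/= ua ub] [].
have idem1 (c : R) : c \is a GRing.unit -> c * c = c -> c = 1.
  by move=> uc; rewrite -{3}[c]mulr1 => /(mulrI uc).
have idem0 (c : R) : c + c = c -> c = 0 by move=> h; rewrite -(addrK c c) h subrr.
move=> /(idem1 _ ua) a1 /(idem1 _ ub) b1; rewrite a1 b1 !mulr1 !mul1r.
by move=> /idem0 -> /idem0 -> /idem0 ->.
Qed.

Lemma eq0_of_eq_sub (x y d : R) : x = y -> d = x - y \/ d = y - x -> d = 0.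
Proof. by move=> -> [] ->; rewrite subrr. Qed.

Definition unipotent p := u2 p = 1 /\ u3 p = 1.

Lemma unipotent_commute p q : unipotent p -> unipotent q -> abar_commute p q.
Proof.
case: p q => a b x y z [a' b' x' y' z'] [/= -> ->] [/= -> ->].
by rewrite /abar_commute /abar_mul /=; congr Abar; ring.
Qed.

Definition root_coord (k : 'I_3) p :=
  match val k with 0 => x12 p | 1 => x23 p | _ => x34 p end.

Definition root_elem (k : 'I_3) r :=
  match val k with 0 => Abar 1 1 r 0 0 | 1 => Abar 1 1 0 r 0 | _ => Abar 1 1 0 0 r end.

Definition in_root k p := exists r, p = root_elem k r.

Definition in_roots p := exists k, in_root k p.

Lemma root_elem_valid k r : abar_valid (root_elem k r).
Proof. by case: k => [[|[|[|//]]] ?]; split; exact: unitr1. Qed.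

Lemma root_elem_unipotent k r : unipotent (root_elem k r).
Proof. by case: k => [[|[|[|//]]] ?]. Qed.

Lemma root_coord_elem k r : root_coord k (root_elem k r) = r.
Proof. by case: k => [[|[|[|//]]] ?]. Qed.

Lemma root_coord_elem_neq j k r : j != k -> root_coord j (root_elem k r) = 0.
Proof. by case: j k => [[|[|[|//]]] ?] [[|[|[|//]]] ?]. Qed.

Lemma root_elem0 k : root_elem k 0 = abar1.
Proof. by case: k => [[|[|[|//]]] ?]. Qed.

Lemma root_elemD k r s : root_elem k (r + s) = abar_mul (root_elem k r) (root_elem k s).
Proof. by case: k => [[|[|[|//]]] ?]; rewrite /abar_mul /=; congr Abar; ring. Qed.

Lemma root_coordD k p q : unipotent p -> unipotent q ->
  root_coord k (abar_mul p q) = root_coord k p + root_coord k q.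
Proof.
case: p q => a b x y z [a' b' x' y' z'] [/= -> ->] [/= -> ->].
by case: k => [[|[|[|//]]] ?]; rewrite /root_coord /=; ring.
Qed.

Lemma root_elem_neq1 k r : r != 0 -> root_elem k r <> abar1.
Proof.
by move=> nr /(congr1 (root_coord k)); rewrite -(root_elem0 k) !root_coord_elem; exact/eqP.
Qed.

Lemma in_root_mul k p q : in_root k p -> in_root k q -> in_root k (abar_mul p q).
Proof. by case=> r -> [s ->]; exists (r + s); rewrite root_elemD. Qed.

Lemma root_elem_eq k j r s : r != 0 -> root_elem k r = root_elem j s -> k = j /\ r = s.
Proof.
move=> nr e; have := congr1 (root_coord k) e; rewrite root_coord_elem.
have [<- | kj] := eqVneq j k; first by rewrite root_coord_elem.
by rewrite root_coord_elem_neq 1?eq_sym // => r0; rewrite r0 eqxx in nr.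
Qed.

(* [h'] plays the role of [h^-1], so that no inversion is needed in [abar]. *)
Definition commutes_with_conjugates p := forall h h', abar_valid h -> abar_valid h' ->
  abar_mul h h' = abar1 -> abar_commute p (abar_mul (abar_mul h p) h').

Lemma unipotentP p : abar_valid p -> unipotent p <-> commutes_with_conjugates p.
Proof.
case: p => a b x y z [/= ua ub]; split.
  move=> [/= -> ->] h h' vh vh' hh'; apply: unipotent_commute => //.
  by split; rewrite /= !mulr1; [exact: (congr1 u2 hh') | exact: (congr1 u3 hh')].
have conj_root k : abar_mul (root_elem k 1) (root_elem k (-1)) = abar1.
  by rewrite -root_elemD subrr root_elem0.
have sq1 (c : R) : (c - 1) ^+ 2 = 0 -> c = 1.
  by move/eqP; rewrite expf_eq0 subr_eq0 => /andP[_ /eqP].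
(* Conjugating by e12(1) and by e34(1) gives (u2 - 1)^2 = 0 and (u3 - 1)^2 = 0. *)
move=> Hc; split => /=; apply: sq1.
- have /(congr1 x12)/= := Hc _ _ (root_elem_valid 0 1) (root_elem_valid 0 (-1)) (conj_root 0).
  by move/eq0_of_eq_sub; apply; first [left; ring | right; ring].
- have /(congr1 x34)/= := Hc _ _ (root_elem_valid 2 1) (root_elem_valid 2 (-1)) (conj_root 2).
  by move/eq0_of_eq_sub; apply; first [left; ring | right; ring].
Qed.

Lemma in_roots_unipotent p : in_roots p -> unipotent p.
Proof. by case=> k [r ->]; exact: root_elem_unipotent. Qed.

Definition root_index p : 'I_3 := if x12 p != 0 then 0 else if x23 p != 0 then 1 else 2.

Lemma root_indexP p : in_roots p -> in_root (root_index p) p.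
Proof.
case=> k [r ->]; have [-> | nr] := eqVneq r 0.
  by rewrite root_elem0; exists 0; rewrite root_elem0.
by case: k => [[|[|[|//]]] ?]; rewrite /root_index /= ?nr ?eqxx /=; exists r.
Qed.

Lemma in_root_nontrivial k p : in_root k p -> p <> abar1 -> root_coord k p != 0.
Proof. by case=> r ->; rewrite root_coord_elem; apply: contra_not_neq => ->; rewrite root_elem0. Qed.

Lemma not_in_roots_mul k j p q : k != j -> in_root k p -> in_root j q ->
  p <> abar1 -> q <> abar1 -> ~ in_roots (abar_mul p q).
Proof.
move=> kj hp hq np nq [l [t e]].
have [nr ns] := (in_root_nontrivial hp np, in_root_nontrivial hq nq).
case: hp hq e nr ns => r -> [s ->] e; rewrite !root_coord_elem => nr ns.
have at_l m c : root_coord m (root_elem l t) = c -> c != 0 -> m = l.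
  by have [// | ml] := eqVneq m l; rewrite root_coord_elem_neq // => <-; rewrite eqxx.
have coordD m : root_coord m (root_elem l t) =
    root_coord m (root_elem k r) + root_coord m (root_elem j s).
  by rewrite -e root_coordD //; exact: root_elem_unipotent.
have kl : k = l.
  by apply: (at_l k r) => //; rewrite coordD root_coord_elem root_coord_elem_neq ?addr0.
have jl : j = l.
  by apply: (at_l j s) => //; rewrite coordD root_coord_elem root_coord_elem_neq 1?eq_sym ?add0r.
by rewrite kl jl eqxx in kj.
Qed.

Definition commutes_with_nonunipotent p :=
  exists2 h, abar_valid h /\ ~ unipotent h & abar_commute p h.

Section NontrivialUnits.
Hypothesis units_nontrivial : exists u : R, u \is a GRing.unit /\ u != 1.

Lemma in_rootsP p : unipotent p -> in_roots p <-> commutes_with_nonunipotent p.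
Proof.
move=> up; split.
  have [u [u_unit /negbTE u_neq1]] := units_nontrivial.
  case=> -[[|[|[|//]]] ?] [r ->] /=.
  - exists (Abar 1 u 0 0 0); last by rewrite /abar_commute /abar_mul /=; congr Abar; ring.
    by split; [split; rewrite ?unitr1 | case=> _ /eqP; rewrite u_neq1].
  - exists (Abar u u 0 0 0); last by rewrite /abar_commute /abar_mul /=; congr Abar; ring.
    by split; [split | case=> /eqP; rewrite u_neq1].
  - exists (Abar u 1 0 0 0); last by rewrite /abar_commute /abar_mul /=; congr Abar; ring.
    by split; [split; rewrite ?unitr1 | case=> /eqP; rewrite u_neq1].
case: p up => a b x y z [/= -> ->] [[a' b' x' y' z'] [_ nU] /= c].
have [cx cy cz] : [/\ x * (a' - 1) = 0, y * (b' - a') = 0 & z * (b' - 1) = 0].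
  split; [move: (congr1 x12 c) | move: (congr1 x23 c) | move: (congr1 x34 c)];
  by move=> /= /eq0_of_eq_sub; apply; first [left; ring | right; ring].
have eq_of_mul_eq0 (w d1 d2 : R) : w * (d1 - d2) = 0 -> w != 0 -> d1 = d2.
  by move/eqP; rewrite mulf_eq0 subr_eq0 => /orP[/eqP -> | /eqP //]; rewrite eqxx.
have [-> | nx] := eqVneq x 0.
  have [-> | ny] := eqVneq y 0; first by exists 2, z.
  have [-> | nz] := eqVneq z 0; first by exists 1, y.
  by case: nU; split; rewrite /= -?(eq_of_mul_eq0 _ _ _ cy ny) (eq_of_mul_eq0 _ _ _ cz nz).
have a1 := eq_of_mul_eq0 _ _ _ cx nx.
have [-> | ny] := eqVneq y 0; last by case: nU; split; rewrite /= ?(eq_of_mul_eq0 _ _ _ cy ny) a1.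
have [-> | nz] := eqVneq z 0; last by case: nU; split; rewrite /= ?a1 ?(eq_of_mul_eq0 _ _ _ cz nz).
by exists 0, x.
Qed.

End NontrivialUnits.

Local Hint Resolve abar_valid1 abar_valid_mul root_elem_valid : core.

Record abar_aut (F : abar -> abar) : Prop := AbarAut {
  abar_aut_valid : forall p, abar_valid p -> abar_valid (F p);
  abar_aut_mul : forall p q, abar_valid p -> abar_valid q ->
    F (abar_mul p q) = abar_mul (F p) (F q);
  abar_aut_inj : forall p q, abar_valid p -> abar_valid q -> F p = F q -> p = q;
  abar_aut_surj : forall q, abar_valid q -> exists2 p, abar_valid p & F p = q }.

Section Automorphism.
Hypothesis units_nontrivial : exists u : R, u \is a GRing.unit /\ u != 1.
Variables (F : abar -> abar) (F_aut : abar_aut F).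
Let F_valid := abar_aut_valid F_aut.
Let F_mul := abar_aut_mul F_aut.
Let F_inj := abar_aut_inj F_aut.
Let F_surj := abar_aut_surj F_aut.

Lemma aut1 : F abar1 = abar1.
Proof. by apply: abar_idem; rewrite -?F_mul ?abar_mulr1; auto. Qed.

Lemma aut_neq1 p : abar_valid p -> p <> abar1 -> F p <> abar1.
Proof. by move=> vp np e; apply: np; apply: F_inj; rewrite ?aut1; auto. Qed.

Lemma aut_commute p q : abar_valid p -> abar_valid q ->
  abar_commute p q <-> abar_commute (F p) (F q).
Proof.
move=> vp vq; rewrite /abar_commute -!F_mul //.
by split=> [-> // | /F_inj]; apply; auto.
Qed.

Lemma aut_commutes_with_conjugates p : abar_valid p ->
  commutes_with_conjugates p <-> commutes_with_conjugates (F p).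
Proof.
move=> vp; split=> Hc.
  move=> _ _ /F_surj[h vh <-] /F_surj[h' vh' <-].
  rewrite -aut1 -F_mul // => /F_inj hh'.
  have := Hc h h' vh vh' (hh' (abar_valid_mul vh vh') abar_valid1).
  by rewrite (aut_commute vp) ?F_mul; auto.
move=> h h' vh vh' hh'; apply/(aut_commute vp); auto.
rewrite !F_mul; auto; apply: (Hc (F h) (F h')); auto.
by rewrite -F_mul ?hh' ?aut1.
Qed.

Lemma aut_unipotent p : abar_valid p -> unipotent p <-> unipotent (F p).
Proof.
move=> vp; rewrite unipotentP // (unipotentP (F_valid vp)).
exact: aut_commutes_with_conjugates.
Qed.

Lemma aut_commutes_with_nonunipotent p : abar_valid p ->
  commutes_with_nonunipotent p <-> commutes_with_nonunipotent (F p).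
Proof.
move=> vp; split=> [[h [vh nh] c] | [_ [/F_surj[h vh <-] nh] c]].
  exists (F h); last exact: (aut_commute vp vh).1.
  by split; [auto | move/(aut_unipotent vh)].
exists h; last exact: (aut_commute vp vh).2.
by split=> // /(aut_unipotent vh).
Qed.

Lemma aut_in_roots p : abar_valid p -> in_roots p <-> in_roots (F p).
Proof.
move=> vp; split=> /[dup] /in_roots_unipotent up.
  have uFp := (aut_unipotent vp).1 up.
  by move/(in_rootsP units_nontrivial up)/(aut_commutes_with_nonunipotent vp)/(in_rootsP units_nontrivial uFp).
have up' := (aut_unipotent vp).2 up.
by move/(in_rootsP units_nontrivial up)/(aut_commutes_with_nonunipotent vp)/(in_rootsP units_nontrivial up').
Qed.

Definition root_perm k := root_index (F (root_elem k 1)).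

Definition root_aut k r := root_coord (root_perm k) (F (root_elem k r)).

Lemma aut_root_elem_in_roots k r : in_roots (F (root_elem k r)).
Proof. by apply/(aut_in_roots (root_elem_valid k r)); exists k, r. Qed.

Lemma aut_root_elem_neq1 k r : r != 0 -> F (root_elem k r) <> abar1.
Proof. by move=> nr; apply: aut_neq1 => //; exact: root_elem_neq1. Qed.

Lemma aut_root_elem_in_root_perm k r : in_root (root_perm k) (F (root_elem k r)).
Proof.
have [-> | nr] := eqVneq r 0; first by rewrite root_elem0 aut1; exists 0; rewrite root_elem0.
have hr := root_indexP (aut_root_elem_in_roots k r).
have [<- // | nperm] := eqVneq (root_index (F (root_elem k r))) (root_perm k).
have h1 : in_root (root_perm k) (F (root_elem k 1)) := root_indexP (aut_root_elem_in_roots k 1).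
exfalso; apply: (not_in_roots_mul nperm hr h1 (aut_root_elem_neq1 nr)).
  exact: aut_root_elem_neq1 (oner_neq0 R).
by rewrite -F_mul // -root_elemD; exact: aut_root_elem_in_roots.
Qed.

Lemma root_perm_inj : injective root_perm.
Proof.
move=> k j e; have [// | kj] := eqVneq k j.
have root1 l : in_root l (root_elem l 1) by exists 1.
have ne1 l : root_elem l 1 <> abar1 by apply: root_elem_neq1; exact: oner_neq0.
exfalso; apply: (not_in_roots_mul kj (root1 k) (root1 j) (ne1 k) (ne1 j)).
apply/aut_in_roots; auto; exists (root_perm k); rewrite F_mul //.
by apply: in_root_mul; last rewrite e; exact: aut_root_elem_in_root_perm.
Qed.

Lemma aut_root_elem k r : F (root_elem k r) = root_elem (root_perm k) (root_aut k r).
Proof.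
by have [s e] := aut_root_elem_in_root_perm k r; rewrite /root_aut e root_coord_elem.
Qed.

Lemma root_autD k r s : root_aut k (r + s) = root_aut k r + root_aut k s.
Proof. by rewrite {1}/root_aut root_elemD F_mul // !aut_root_elem -root_elemD root_coord_elem. Qed.

Lemma root_aut_inj k : injective (root_aut k).
Proof.
move=> r s e; have : root_elem k r = root_elem k s.
  by apply: F_inj => //; rewrite !aut_root_elem e.
by move/(congr1 (root_coord k)); rewrite !root_coord_elem.
Qed.

Lemma root_aut_surj k t : exists r, root_aut k r = t.
Proof.
have [-> | nt] := eqVneq t 0.
  by exists 0; rewrite /root_aut root_elem0 aut1 -(root_elem0 (root_perm k)) root_coord_elem.
have [p vp ep] := F_surj (root_elem_valid (root_perm k) t).
have [j [r pe]] : in_roots p by apply/(aut_in_roots vp); rewrite ep; exists (root_perm k), t.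
rewrite pe aut_root_elem in ep.
have [/root_perm_inj kj ->] := root_elem_eq nt (esym ep).
by exists r; rewrite kj.
Qed.

End Automorphism.
End Abar.

Arguments abar1 {R}.

Section SquareMatrices.
Variables (R : comUnitRingType) (n : nat).
Implicit Types M N : 'M[R]_n.+1.

Lemma sqmx_mul1C M N : M * N = 1 -> N * M = 1.
Proof. by rewrite -!mulmxE; exact: mulmx1C. Qed.

Lemma sqmx_invE M N : M * N = 1 -> M \is a GRing.unit /\ M^-1 = N.
Proof.
move=> MN; have uM : M \is a GRing.unit by apply/unitrP; exists N; rewrite (sqmx_mul1C MN).
by split=> //; rewrite -[RHS](mulKr uM) MN mulr1.
Qed.

End SquareMatrices.

Section Matrices.
Variable R : idomainType.
Implicit Types M N : 'M[R]_4.

Definition entry M (i j : nat) := M (inord i) (inord j).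

Lemma entry_ext M N : (forall i j, (i < 4)%N -> (j < 4)%N -> entry M i j = entry N i j) ->
  M = N.
Proof.
by move=> h; apply/matrixP=> i j; have := h i j (ltn_ord i) (ltn_ord j); rewrite /entry !inord_val.
Qed.

Lemma entry_mul M N i j : entry (M * N) i j = entry M i 0 * entry N 0 j +
  entry M i 1 * entry N 1 j + entry M i 2 * entry N 2 j + entry M i 3 * entry N 3 j.
Proof.
rewrite /entry -mulmxE mxE !big_ord_recr big_ord0 /= add0r.
by congr (_ * _ + _ * _ + _ * _ + _ * _); congr (_ _ _); apply/val_inj; rewrite /= inordK.
Qed.

Lemma entry_delta i j r a b : (i < 4)%N -> (j < 4)%N -> (a < 4)%N -> (b < 4)%N ->
  entry (1%:M + r *: delta_mx (inord i) (inord j)) a b =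
  (a == b)%:R + r * ((a == i) && (b == j))%:R.
Proof. by move=> *; rewrite /entry !mxE -!val_eqE /= !inordK. Qed.

Definition a4_entry (a b x y z p q t : R) (i j : nat) : R :=
  match i, j with
  | 0, 0 => 1 | 1, 1 => a | 2, 2 => b | 3, 3 => 1
  | 0, 1 => x | 1, 2 => y | 2, 3 => z
  | 0, 2 => p | 1, 3 => q | 0, 3 => t | _, _ => 0 end.

Definition a4mx a b x y z p q t : 'M[R]_4 := \matrix_(i, j) a4_entry a b x y z p q t i j.

Lemma entry_a4mx a b x y z p q t i j : (i < 4)%N -> (j < 4)%N ->
  entry (a4mx a b x y z p q t) i j = a4_entry a b x y z p q t i j.
Proof. by move=> hi hj; rewrite /entry mxE !inordK. Qed.

Lemma a4mx_mul a b x y z p q t a' b' x' y' z' p' q' t' :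
  a4mx a b x y z p q t * a4mx a' b' x' y' z' p' q' t' =
  a4mx (a * a') (b * b') (x' + x * a') (a * y' + y * b') (b * z' + z)
     (p' + x * y' + p * b') (a * q' + y * z' + q) (t' + x * q' + p * z' + t).
Proof.
apply: entry_ext => i j hi hj; rewrite entry_mul !entry_a4mx //.
by case: i hi => [|[|[|[|//]]]] _; case: j hj => [|[|[|[|//]]]] _ /=; ring.
Qed.

Lemma a4mx1 : a4mx 1 1 0 0 0 0 0 0 = 1.
Proof.
apply: entry_ext => i j hi hj; rewrite entry_a4mx // /entry !mxE -val_eqE /= !inordK //.
by case: i hi => [|[|[|[|//]]]] _; case: j hj => [|[|[|[|//]]]].
Qed.

Lemma a4mx_congr a b x y z p q t a' b' x' y' z' p' q' t' :
  a = a' -> b = b' -> x = x' -> y = y' -> z = z' -> p = p' -> q = q' -> t = t' ->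
  a4mx a b x y z p q t = a4mx a' b' x' y' z' p' q' t'.
Proof. by move=> -> -> -> -> -> -> -> ->. Qed.

Lemma a4mx_unipotent_inv x y z p q t : a4mx 1 1 x y z p q t *
  a4mx 1 1 (-x) (-y) (-z) (x * y - p) (y * z - q) (x * q - x * y * z + p * z - t) = 1.
Proof. by rewrite a4mx_mul -a4mx1; apply: a4mx_congr; ring. Qed.

Lemma a4mx_diag_inv a b : a \is a GRing.unit -> b \is a GRing.unit ->
  a4mx a b 0 0 0 0 0 0 * a4mx a^-1 b^-1 0 0 0 0 0 0 = 1.
Proof.
by move=> ua ub; rewrite a4mx_mul -a4mx1 !mulrV //; apply: a4mx_congr; ring.
Qed.

Lemma a4mx_diag_unipotent a b x y z p q t : a \is a GRing.unit -> b \is a GRing.unit ->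
  a4mx a b x y z p q t =
  a4mx a b 0 0 0 0 0 0 * a4mx 1 1 x (a^-1 * y) (b^-1 * z) p (a^-1 * q) t.
Proof.
move=> ua ub; rewrite a4mx_mul; apply: a4mx_congr; rewrite ?mulVKr //; ring.
Qed.

Lemma inA4_a4mx M : inA4 M -> M = a4mx (entry M 1 1) (entry M 2 2)
  (entry M 0 1) (entry M 1 2) (entry M 2 3) (entry M 0 2) (entry M 1 3) (entry M 0 3).
Proof.
case=> low [d0 [d3 _]]; apply: entry_ext => i j hi hj; rewrite entry_a4mx //.
have z : (j < i)%N -> entry M i j = 0.
  by move=> ji; apply: low; rewrite !inordK // (ltn_trans ji).
by move: z; case: i hi => [|[|[|[|//]]]] _; case: j hj => [|[|[|[|//]]]] _ //= z; rewrite z.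
Qed.

Lemma a4mx_inA4 a b x y z p q t : a \is a GRing.unit -> b \is a GRing.unit ->
  inA4 (a4mx a b x y z p q t).
Proof.
move=> ua ub; split=> [i j | ]; last by rewrite !mxE !inordK.
by rewrite mxE; case: i j => [[|[|[|[|//]]]] ?] [[|[|[|[|//]]]] ?].
Qed.

Lemma inU4_a4mx M : inU4 M -> M = a4mx 1 1 (entry M 0 1) (entry M 1 2) (entry M 2 3)
  (entry M 0 2) (entry M 1 3) (entry M 0 3).
Proof.
case=> low diag; rewrite {1}(@inA4_a4mx M) /entry ?diag //.
by do !split; rewrite ?diag ?unitr1.
Qed.

Lemma a4mx_inU4 x y z p q t : inU4 (a4mx 1 1 x y z p q t).
Proof.
have [low _] := a4mx_inA4 x y z p q t (unitr1 R) (unitr1 R).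
by split=> // -[[|[|[|[|//]]]] ?]; rewrite mxE.
Qed.

Lemma a4mx_inv a b x y z p q t : a \is a GRing.unit -> b \is a GRing.unit ->
  exists2 N, inA4 N & a4mx a b x y z p q t * N = 1.
Proof.
move=> ua ub; rewrite (a4mx_diag_unipotent _ _ _ _ _ _ ua ub).
move: (a^-1 * y) (b^-1 * z) (a^-1 * q) => {}y {}z {}q.
exists (a4mx 1 1 (-x) (-y) (-z) (x * y - p) (y * z - q) (x * q - x * y * z + p * z - t) *
        a4mx a^-1 b^-1 0 0 0 0 0 0).
  by rewrite a4mx_mul; apply: a4mx_inA4; rewrite mul1r unitrV.
by rewrite mulrA -(mulrA (a4mx a b _ _ _ _ _ _)) a4mx_unipotent_inv mulr1 a4mx_diag_inv.
Qed.

Lemma inA4_inv M : inA4 M -> exists2 N, inA4 N & M * N = 1.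
Proof. by move=> hM; rewrite (inA4_a4mx hM); case: hM => _ [_ [_ [ua ub]]]; exact: a4mx_inv. Qed.

Lemma inA4_unit M : inA4 M -> M \is a GRing.unit.
Proof. by case/inA4_inv => N _ /sqmx_invE[]. Qed.

Lemma inA4V M : inA4 M -> inA4 M^-1.
Proof. by case/inA4_inv => N hN /sqmx_invE[_ ->]. Qed.

Lemma a4mx_unipotentV x y z p q t : (a4mx 1 1 x y z p q t)^-1 =
  a4mx 1 1 (-x) (-y) (-z) (x * y - p) (y * z - q) (x * q - x * y * z + p * z - t).
Proof. exact: (sqmx_invE (a4mx_unipotent_inv _ _ _ _ _ _)).2. Qed.

Lemma inU4'_a4mx M : inU4' M -> exists p q t, M = a4mx 1 1 0 0 0 p q t.
Proof.
have form a b x y z p q t : a = 1 -> b = 1 -> x = 0 -> y = 0 -> z = 0 ->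
    exists p' q' t', a4mx a b x y z p q t = a4mx 1 1 0 0 0 p' q' t'.
  by move=> -> -> -> -> ->; exists p, q, t.
elim=> {M} [| x y /inU4_a4mx -> /inU4_a4mx -> | x y _ [p [q [t ->]]] _ [p' [q' [t' ->]]]
             | x _ [p [q [t ->]]]].
- by exists 0, 0, 0; rewrite a4mx1.
- by rewrite !a4mx_unipotentV !a4mx_mul; apply: form; ring.
- by rewrite a4mx_mul; apply: form; ring.
- by rewrite a4mx_unipotentV; apply: form; ring.
Qed.

(* The corner entries are commutators: [e12(1), e23(p)] = e13(p),
   [e23(1), e34(q)] = e24(q) and [e12(1), e24(t)] = e14(t). *)
Lemma a4mx_inU4' p q t : inU4' (a4mx 1 1 0 0 0 p q t).
Proof.
pose comm M N := M^-1 * N^-1 * M * N.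
have -> : a4mx 1 1 0 0 0 p q t =
    comm (a4mx 1 1 1 0 0 0 0 0) (a4mx 1 1 0 p 0 0 0 0) *
    comm (a4mx 1 1 0 1 0 0 0 0) (a4mx 1 1 0 0 q 0 0 0) *
    comm (a4mx 1 1 1 0 0 0 0 0) (a4mx 1 1 0 0 0 0 t 0).
  by rewrite /comm !a4mx_unipotentV !a4mx_mul; apply: a4mx_congr; ring.
by apply: U4'_mul; first apply: U4'_mul; apply: U4'_comm; exact: a4mx_inU4.
Qed.

Definition coords M : abar R :=
  Abar (entry M 1 1) (entry M 2 2) (entry M 0 1) (entry M 1 2) (entry M 2 3).

Definition of_abar (p : abar R) := a4mx (u2 p) (u3 p) (x12 p) (x23 p) (x34 p) 0 0 0.

Lemma coords_a4mx a b x y z p q t : coords (a4mx a b x y z p q t) = Abar a b x y z.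
Proof. by rewrite /coords !entry_a4mx. Qed.

Lemma coords_of_abar p : coords (of_abar p) = p.
Proof. by case: p => a b x y z; rewrite /of_abar coords_a4mx. Qed.

Lemma of_abar_inA4 p : abar_valid p -> inA4 (of_abar p).
Proof. by case=> ua ub; exact: a4mx_inA4. Qed.

Lemma coords_valid M : inA4 M -> abar_valid (coords M).
Proof. by case=> _ [_ [_ [ua ub]]]. Qed.

Lemma inA4_mul M N : inA4 M -> inA4 N -> inA4 (M * N).
Proof.
move=> hM hN; have [[ua ub] [va vb]] := (coords_valid hM, coords_valid hN).
by rewrite (inA4_a4mx hM) (inA4_a4mx hN) a4mx_mul; apply: a4mx_inA4; rewrite unitrM; apply/andP.
Qed.

Lemma coords_mul M N : inA4 M -> inA4 N -> coords (M * N) = abar_mul (coords M) (coords N).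
Proof. by move=> hM hN; rewrite {1}(inA4_a4mx hM) {1}(inA4_a4mx hN) a4mx_mul coords_a4mx. Qed.

Lemma inU4'_coords M : inA4 M -> inU4' M <-> coords M = abar1.
Proof.
move=> hM; split=> [/inU4'_a4mx[p [q [t ->]]] | e]; first by rewrite coords_a4mx.
rewrite (inA4_a4mx hM); move: e => [-> -> -> -> ->]; exact: a4mx_inU4'.
Qed.

Lemma congU_coords M N : inA4 M -> inA4 N -> congU M N <-> coords M = coords N.
Proof.
move=> hM hN; have [hMV uM] := (inA4V hM, inA4_unit hM).
rewrite /congU (inU4'_coords (inA4_mul hMV hN)) (coords_mul hMV hN).
have VM : abar_mul (coords M^-1) (coords M) = abar1.
  by rewrite -coords_mul // mulVr // -a4mx1 coords_a4mx.
split=> [e | <-] //.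
by rewrite -[N](mulVKr uM) (coords_mul hM (inA4_mul hMV hN)) (coords_mul hMV hN) e abar_mulr1.
Qed.

Lemma elem_k_of_abar k r : elem_k k r = of_abar (root_elem k r).
Proof.
apply: entry_ext => i j hi hj; rewrite /elem_k /elem.
case: k => [[|[|[|//]]] ?]; rewrite entry_delta // entry_a4mx //=;
by case: i hi => [|[|[|[|//]]]] _; case: j hj => [|[|[|[|//]]]] _ /=; ring.
Qed.

End Matrices.

Arguments of_abar {R}.

Section InducedAutomorphism.
Variables (R : idomainType) (phi : 'M[R]_4 -> 'M[R]_4).
Hypothesis phi_A4 : forall M, inA4 M -> inA4 (phi M).
Hypothesis phi_congU : forall M N, inA4 M -> inA4 N -> congU M N -> congU (phi M) (phi N).
Hypothesis phi_mul : forall M N, inA4 M -> inA4 N -> congU (phi (M * N)) (phi M * phi N).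
Hypothesis phi_congU_inj : forall M N, inA4 M -> inA4 N ->
  congU (phi M) (phi N) -> congU M N.
Hypothesis phi_surj : forall N, inA4 N -> exists2 M, inA4 M & congU (phi M) N.

Definition induced_aut p := coords (phi (of_abar p)).

Lemma induced_aut_valid p : abar_valid p -> abar_valid (induced_aut p).
Proof. by move=> vp; apply/coords_valid/phi_A4/of_abar_inA4. Qed.

Lemma coords_phi M : inA4 M -> coords (phi M) = induced_aut (coords M).
Proof.
move=> hM; have hm := of_abar_inA4 (coords_valid hM).
apply/esym/congU_coords; try exact: phi_A4.
by apply: phi_congU => //; apply/congU_coords; rewrite ?coords_of_abar.
Qed.

Lemma induced_aut_mul p q : abar_valid p -> abar_valid q ->
  induced_aut (abar_mul p q) = abar_mul (induced_aut p) (induced_aut q).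
Proof.
move=> vp vq; have [hp hq] := (of_abar_inA4 vp, of_abar_inA4 vq).
have hpq := inA4_mul hp hq.
rewrite -{1}(coords_of_abar p) -{1}(coords_of_abar q) -coords_mul // -coords_phi //.
rewrite -coords_mul; try exact: phi_A4.
by apply/congU_coords; [exact: phi_A4 | apply: inA4_mul; exact: phi_A4 | exact: phi_mul].
Qed.

Lemma induced_aut_inj p q : abar_valid p -> abar_valid q ->
  induced_aut p = induced_aut q -> p = q.
Proof.
move=> vp vq e; have [hp hq] := (of_abar_inA4 vp, of_abar_inA4 vq).
rewrite -(coords_of_abar p) -(coords_of_abar q); apply/congU_coords => //.
by apply: phi_congU_inj => //; apply/congU_coords => //; exact: phi_A4.
Qed.

Lemma induced_aut_surj q : abar_valid q -> exists2 p, abar_valid p & induced_aut p = q.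
Proof.
move=> vq; have [M hM e] := phi_surj (of_abar_inA4 vq).
exists (coords M); first exact: coords_valid.
rewrite -coords_phi // -(coords_of_abar q); apply/congU_coords => //.
  exact: phi_A4.
exact: of_abar_inA4.
Qed.

Lemma induced_abar_aut : abar_aut induced_aut.
Proof.
split; [exact: induced_aut_valid | exact: induced_aut_mul | exact: induced_aut_inj |].
exact: induced_aut_surj.
Qed.

End InducedAutomorphism.

Theorem mainTheorem11 (R : idomainType)
  (hu : exists u : R, u \is a GRing.unit /\ u != 1)
  (phi : 'M[R]_4 -> 'M[R]_4) (hphi : quot_aut phi) :
  exists (s : {perm 'I_3}) (Phi : 'I_3 -> R -> R),
    (forall k, additive_aut (Phi k)) /\
    (forall (k : 'I_3) (r : R), congU (phi (elem_k k r)) (elem_k (s k) (Phi k r))).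
Proof.
case: hphi => phi_A4 phi_congU phi_mul phi_inj phi_surj.
have F_aut := induced_abar_aut phi_A4 phi_congU phi_mul phi_inj phi_surj.
exists (perm (root_perm_inj hu F_aut)), (root_aut (induced_aut phi)).
split=> [k | k r].
  split; first exact: (root_autD hu F_aut).
  exact: inj_surj_bij (@root_aut_inj _ hu _ F_aut k) (root_aut_surj hu F_aut k).
have valid_elem k' r' : inA4 (of_abar (root_elem k' r')).
  exact/of_abar_inA4/root_elem_valid.
rewrite permE !elem_k_of_abar; apply/congU_coords; first exact/phi_A4/valid_elem.
  exact: valid_elem.
by rewrite coords_of_abar -(aut_root_elem hu F_aut).
Qed.
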